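(* Let $S$ and $T$ be pointed sets and $n\in\mathbb{N}$. There is a bijection $\mathrm{Hist}^n(S,T)\cong\mathrm{Hist}^n_{strm}(S,T)$.
   Context: For a set $S$, $\mathrm{List}(S)=\coprod_{t\in\mathbb{N}}S^t$ is the set of finite lists (length $|\ell|=t\geq0$); for $|\ell|\geq1$, $\partial\ell$ drops the last entry. An $n$-historical propagator from $S$ to $T$ is a function $f\colon\mathrm{List}(S)\to\mathrm{List}(T)$ with $|f(\ell)|=|\ell|+n$ for all $\ell$ and $\partial f(\ell)=f(\partial\ell)$ whenever $|\ell|\geq1$; $\mathrm{Hist}^n(S,T)$ is the set of these. An $S$-stream is a function $\sigma\colon\mathbb{N}_{\geq1}\to S$; $\mathrm{Strm}(S)$ is the set of $S$-streams, and for $t\in\mathbb{N}$, $\sigma|_t\in\mathrm{List}(S)$ is the list $[\sigma(1),\dots,\sigma(t)]$. A function $F\colon\mathrm{Strm}(S)\to\mathrm{Strm}(T)$ is an $n$-historical stream propagator if for all $t\in\mathbb{N}$ and all $\sigma,\sigma'\in\mathrm{Strm}(S)$ with $\sigma|_t=\sigma'|_t$ one has $F(\sigma)|_{t+n}=F(\sigma')|_{t+n}$; $\mathrm{Hist}^n_{strm}(S,T)$ is the set of these. *)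

From mathcomp Require Import all_boot.
Set Implicit Arguments. Unset Strict Implicit. Unset Printing Implicit Defensive.

Definition dropLast (A : Type) (l : seq A) : seq A := take (size l).-1 l.

Definition is_hist (S T : Type) (n : nat) (f : seq S -> seq T) : Prop :=
  (forall l, size (f l) = size l + n) /\
  (forall l, 0 < size l -> dropLast (f l) = f (dropLast l)).

Definition Hist (n : nat) (S T : Type) : Type := {f : seq S -> seq T | is_hist n f}.

(* S-streams N_{>=1} -> S, re-indexed from 0: a stream sigma is represented
   by [s : nat -> S] with s k = sigma (k+1).  This is a bijective re-indexing. *)
Definition Strm (S : Type) : Type := nat -> S.

Definition restr (S : Type) (s : Strm S) (t : nat) : seq S := map s (iota 0 t).

Definition is_hist_strm (S T : Type) (n : nat) (F : Strm S -> Strm T) : Prop :=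
  forall (t : nat) (s s' : Strm S),
    restr s t = restr s' t -> restr (F s) (t + n) = restr (F s') (t + n).

Definition Hist_strm (n : nat) (S T : Type) : Type :=
  {F : Strm S -> Strm T | is_hist_strm n F}.

From mathcomp Require Import all_boot.
From Stdlib Require Import ProofIrrelevance FunctionalExtensionality.
Set Implicit Arguments. Unset Strict Implicit. Unset Printing Implicit Defensive.

(* Both kinds of propagator express the same causality: output k may depend
   only on the inputs 0, ..., k - n.  A list propagator f induces a stream
   propagator whose k-th output is the k-th entry of f applied to the first
   k + 1 - n inputs; conversely a stream propagator F induces f l := the first
   |l| + n outputs of F on l padded by the base point of S.  The key fact is
   that a list propagator commutes with truncation:
   take (m + n) (f l) = f (take m l), so the two constructions are inverse. *)

Section Restriction.
Variable S : Type.
Implicit Types s : Strm S.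

Lemma size_restr s t : size (restr s t) = t.
Proof. by rewrite size_map size_iota. Qed.

Lemma nth_restr s (x0 : S) t k : k < t -> nth x0 (restr s t) k = s k.
Proof. by move=> lt_kt; rewrite /restr -/(mkseq _ _) nth_mkseq. Qed.

Lemma eq_restrP s s' t :
  restr s t = restr s' t <-> forall k, k < t -> s k = s' k.
Proof.
split=> [eq_ss' k lt_kt | eq_ss'].
  by rewrite -(nth_restr s (s k) lt_kt) eq_ss' nth_restr.
by apply/eq_in_map => k; rewrite mem_iota add0n => /andP[_ /eq_ss'].
Qed.

Lemma take_restr s t m : m <= t -> take m (restr s t) = restr s m.
Proof. by move=> le_mt; rewrite -map_take take_iota (minn_idPl le_mt). Qed.

End Restriction.

Lemma dropLast_rcons (A : Type) (l : seq A) (x : A) : dropLast (rcons l x) = l.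
Proof. by rewrite /dropLast size_rcons -cats1 takel_cat ?take_size. Qed.

Lemma take_hist (S T : Type) (n : nat) (f : seq S -> seq T) (l : seq S) m :
  is_hist n f -> m <= size l -> take (m + n) (f l) = f (take m l).
Proof.
case=> size_f dropLast_f; elim/last_ind: l m => [|l x IHl] m.
  by rewrite leqn0 => /eqP->; rewrite take_oversize ?size_f.
rewrite size_rcons leq_eqVlt ltnS => /orP[/eqP-> | le_ml].
  by rewrite !take_oversize ?size_f ?size_rcons.
have f_l : f l = take (size l + n) (f (rcons l x)).
  by rewrite -[in LHS](dropLast_rcons l x) -dropLast_f ?size_rcons // /dropLast
             size_f size_rcons.
by rewrite -[in RHS]cats1 takel_cat // -IHl // f_l take_takel // leq_add2r.
Qed.

Lemma ltn_subSnDn k n : k < k.+1 - n + n.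
Proof. by rewrite addnC -leq_subLR. Qed.

Section Correspondence.
Variables (S T : Type) (s0 : S) (t0 : T) (n : nat).

Definition strm_of_seq (l : seq S) : Strm S := fun k => nth s0 l k.

Definition strm_prop_of_hist (f : seq S -> seq T) : Strm S -> Strm T :=
  fun s k => nth t0 (f (restr s (k.+1 - n))) k.

Definition hist_of_strm_prop (F : Strm S -> Strm T) : seq S -> seq T :=
  fun l => restr (F (strm_of_seq l)) (size l + n).

Lemma strm_prop_of_hist_is_hist_strm f : is_hist_strm n (strm_prop_of_hist f).
Proof.
move=> t s s' /eq_restrP eq_ss'; apply/eq_restrP => k lt_k_tn.
rewrite /strm_prop_of_hist; congr (nth _ (f _) _); apply/eq_restrP => j lt_j.
by apply: eq_ss'; apply: leq_trans lt_j _; rewrite leq_subLR addnC -ltnS.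
Qed.

Lemma hist_of_strm_prop_is_hist F :
  is_hist_strm n F -> is_hist n (hist_of_strm_prop F).
Proof.
move=> F_hist; split=> [l | l]; first by rewrite /hist_of_strm_prop size_restr.
case/lastP: l => [//|l x] _.
rewrite dropLast_rcons /hist_of_strm_prop /dropLast !size_restr size_rcons.
rewrite addSn take_restr //.
apply: F_hist; apply/eq_restrP => k lt_kl.
by rewrite /strm_of_seq nth_rcons lt_kl.
Qed.

Lemma strm_prop_of_histK f :
  is_hist n f -> hist_of_strm_prop (strm_prop_of_hist f) = f.
Proof.
move=> f_hist; apply: functional_extensionality => l.
have size_fl : size (f l) = size l + n by case: f_hist.
apply: (@eq_from_nth _ t0); rewrite size_restr // => k lt_k.
rewrite nth_restr // /strm_prop_of_hist.
have le_kl : k.+1 - n <= size l by rewrite leq_subLR addnC.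
have -> : restr (strm_of_seq l) (k.+1 - n) = take (k.+1 - n) l.
  apply: (@eq_from_nth _ s0); rewrite size_restr ?size_takel // => j lt_j.
  by rewrite nth_restr // nth_take.
by rewrite -(take_hist f_hist le_kl) nth_take ?ltn_subSnDn.
Qed.

Lemma hist_of_strm_propK F :
  is_hist_strm n F -> strm_prop_of_hist (hist_of_strm_prop F) = F.
Proof.
move=> F_hist; apply: functional_extensionality => s.
apply: functional_extensionality => k.
rewrite /strm_prop_of_hist /hist_of_strm_prop size_restr nth_restr ?ltn_subSnDn //.
have /eq_restrP-> // : restr (F (strm_of_seq (restr s (k.+1 - n)))) (k.+1 - n + n)
                      = restr (F s) (k.+1 - n + n).
  by apply: F_hist; apply/eq_restrP => j lt_j; rewrite /strm_of_seq nth_restr.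
exact: ltn_subSnDn.
Qed.

End Correspondence.

Theorem proposition3p9 (S T : Type) (s0 : S) (t0 : T) (n : nat) :
  exists phi : Hist n S T -> Hist_strm n S T, bijective phi.
Proof.
pose phi (f : Hist n S T) : Hist_strm n S T :=
  exist _ _ (strm_prop_of_hist_is_hist_strm t0 n (proj1_sig f)).
pose psi (F : Hist_strm n S T) : Hist n S T :=
  exist _ _ (hist_of_strm_prop_is_hist s0 (proj2_sig F)).
exists phi, psi.
- by case=> f f_hist; apply: subset_eq_compat; exact: strm_prop_of_histK.
- by case=> F F_hist; apply: subset_eq_compat; exact: hist_of_strm_propK.
Qed.
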